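(* Let $X$ be a $\sigma$-compact metrizable Suslin space with no isolated points, let $f:X\to Y$ be any function, and let $T=L_f$. (1) If $Y$ is a compact Fréchet space, then $T$ is closed and $T\cap(\{x\}\times Y)\neq\emptyset$ for each $x\in X$. (2) If $Y$ is a $\sigma$-compact but not compact Fréchet space, then $T$ is closed and there is a countable set $D\subseteq X$ such that $T\cap(\{x\}\times Y)\neq\emptyset$ for each $x\in X\setminus D$.
   Context: $L_f$ denotes the set of accumulation points in $X\times Y$ of the graph $gr(f)=\{(x,f(x)):x\in X\}$. A Suslin space is a Hausdorff continuous image of a Polish space. A Fréchet space is a locally convex topological vector space complete with respect to a translation invariant metric. A space is $\sigma$-compact if it is a countable union of compact sets. *)

From HB Require Import structures.
From mathcomp Require Import all_boot all_order all_algebra.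
From mathcomp Require Import all_classical all_reals all_analysis.
Set Implicit Arguments. Unset Strict Implicit. Unset Printing Implicit Defensive.
Import Order.TTheory GRing.Theory Num.Theory.
Local Open Scope classical_set_scope.
Local Open Scope ring_scope.

Section Defs.
Variable R : realType.

Definition is_metric (T : Type) (d : T -> T -> R) : Prop :=
  [/\ (forall x y, 0 <= d x y),
      (forall x y, d x y = 0 <-> x = y),
      (forall x y, d x y = d y x) &
      (forall x y z, d x z <= d x y + d y z)].

Definition metric_induces (T : topologicalType) (d : T -> T -> R) : Prop :=
  forall (x : T) (A : set T),
    nbhs x A <-> exists2 e : R, 0 < e & [set y | d x y < e] `<=` A.

Definition metric_complete (T : Type) (d : T -> T -> R) : Prop :=
  forall u : nat -> T,
    (forall e : R, 0 < e -> exists N : nat, forall m n : nat,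
        (N <= m)%N -> (N <= n)%N -> d (u m) (u n) < e) ->
    exists l : T, forall e : R, 0 < e -> exists N : nat, forall n : nat,
        (N <= n)%N -> d (u n) l < e.

Definition metrizable (T : topologicalType) : Prop :=
  exists d : T -> T -> R, is_metric d /\ metric_induces d.

Definition completely_metrizable (T : topologicalType) : Prop :=
  exists d : T -> T -> R, [/\ is_metric d, metric_induces d & metric_complete d].

Definition separable_space (T : topologicalType) : Prop :=
  exists D : set T, countable D /\ closure D = setT.

Definition polish_space (T : topologicalType) : Prop :=
  separable_space T /\ completely_metrizable T.

Definition suslin_space (T : topologicalType) : Prop :=
  hausdorff_space T /\
  exists (P : topologicalType) (g : P -> T),
    [/\ polish_space P, continuous g & g @` setT = setT].

(** Fréchet space: locally convex tvs (tvsType is locally convex) complete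
    w.r.t. a translation invariant metric inducing its topology *)
Definition frechet_space (Y : tvsType R) : Prop :=
  exists d : Y -> Y -> R,
    [/\ is_metric d, metric_induces d,
        (forall x y z : Y, d (x + z) (y + z) = d x y) & metric_complete d].

End Defs.

Definition sigma_compact (T : topologicalType) : Prop :=
  exists K : nat -> set T, (forall n, compact (K n)) /\ \bigcup_n K n = setT.

Definition no_isolated_points (T : topologicalType) : Prop :=
  forall x : T, ~ open [set x].

Definition graph_of (X Y : Type) (f : X -> Y) : set (X * Y) :=
  [set p | p.2 = f p.1].

Definition Lf (X Y : topologicalType) (f : X -> Y) : set (X * Y) :=
  limit_point (graph_of f).

From mathcomp Require Import all_boot all_order all_algebra.
From mathcomp Require Import all_classical all_reals all_analysis.
From mathcomp Require Import lra.
Import Order.TTheory GRing.Theory Num.Theory.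
Local Open Scope classical_set_scope.
Local Open Scope ring_scope.

(* If no point of a compact K lies over x in L_f, then {x} * K can be separated
   from the graph of f by a single product neighbourhood, so f maps a punctured
   neighbourhood of x outside K. For Y compact (K = Y) this would make x
   isolated, hence every vertical section of L_f is nonempty. For Y the union
   of compacts K_n, every x with an empty section is an isolated point of some
   f^-1(K_n), and a subset of a separable metric space has only countably many
   isolated points. L_f is closed because X * Y is T1. *)

Section metric_space.
Variables (R : realType) (T : topologicalType) (d : T -> T -> R).
Hypotheses (d_metric : is_metric d) (d_induces : metric_induces d).

Lemma metric_accessible : accessible_space T.
Proof.
have [d_ge0 d_eq0 _ _] := d_metric.
move=> x y xy; exists (~` [set y]); split; rewrite ?inE //=; last exact/eqP.
rewrite openE => z /= zy; apply/(d_induces z _).2; exists (d z y).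
  by rewrite lt0r d_ge0 andbT; apply/eqP => /d_eq0.
by move=> w /= dzw wy; rewrite wy ltxx in dzw.
Qed.

Lemma isolated_ball {A : set T} {x : T} : isolated A x ->
  exists2 e, 0 < e & forall x', A x' -> d x x' < e -> x' = x.
Proof.
move=> [_ [V /(d_induces x V).1 [e e_gt0 ballV] VA]]; exists e => // x' Ax' dx'.
have : (V `&` A) x' by split => //; apply: ballV.
by rewrite VA.
Qed.

Lemma separable_countable_isolated (A : set T) :
  separable_space T -> countable (isolated A).
Proof.
have [_ _ d_sym d_tri] := d_metric.
move=> [S [cS clS]].
have rc_ex x : exists rc : R * T, isolated A x ->
    [/\ S rc.2, d x rc.2 < rc.1 / 2 &
        forall x', A x' -> d x x' < rc.1 -> x' = x].
  have [isoAx|] := pselect (isolated A x); last by exists (0, x).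
  have [e e_gt0 isoe] := isolated_ball isoAx.
  have : closure S x by rewrite clS.
  have e2_gt0 : 0 < e / 2 by rewrite divr_gt0.
  have /[swap]/[apply] [[c [Sc dxc]]] : nbhs x [set c | d x c < e / 2].
    by apply/(d_induces x _).2; exists (e / 2).
  by exists (e, c).
have [rc rcP] := choice rc_ex.
have rc_inj : {in (isolated A : set T) &, injective (fun x => (rc x).2)}.
  (* two isolated points with a common centre would lie in each other's
     isolating balls *)
  move=> x x'; rewrite !inE => isox isox'.
  have [Ax Ax'] := (isolatedS isox, isolatedS isox').
  have [_ dxc ballx] := rcP _ isox.
  have [_ dx'c ballx'] := rcP _ isox'.
  move=> cc'; rewrite -cc' in dx'c.
  have dxx' : d x x' < (rc x).1 / 2 + (rc x').1 / 2.
    by apply: le_lt_trans (d_tri x (rc x).2 x') _; rewrite (d_sym _ x') ltrD.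
  have [ee'|e'e] := leP (rc x).1 (rc x').1.
  - by apply: ballx' => //; rewrite d_sym; apply: lt_le_trans dxx' _; lra.
  - by apply/esym/ballx => //; apply: lt_le_trans dxx' _; lra.
rewrite -(eq_countable (inj_card_eq rc_inj)); apply: sub_countable cS.
by apply: subset_card_le => _ [x /rcP[Sc _ _] <-].
Qed.

End metric_space.

Lemma accessible_prod (X Y : topologicalType) :
  accessible_space X -> accessible_space Y -> accessible_space (X * Y)%type.
Proof.
move=> accX accY [x y] [x' y'] /=; rewrite xpair_eqE negb_and => /orP[xx'|yy'].
- have [A [oA Ax Ax']] := accX _ _ xx'; exists (fst @^-1` A); split => //.
  by apply: open_comp oA => p _; exact: cvg_fst.
- have [B [oB By By']] := accY _ _ yy'; exists (snd @^-1` B); split => //.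
  by apply: open_comp oB => p _; exact: cvg_snd.
Qed.

Lemma dnbhs_isolated (T : topologicalType) (A : set T) (x : T) :
  A x -> (\forall y \near x^', ~ A y) -> isolated A x.
Proof.
move=> Ax nearA; split; first by rewrite inE.
exists [set y | y != x -> ~ A y] => //; apply/seteqP; split => [y [Vy Ay]|_ ->].
  by apply: contrapT => yx; apply: (Vy (introN eqP yx)).
by split => //=; rewrite eqxx.
Qed.

Lemma dnbhs_False_open_set1 (T : topologicalType) (x : T) :
  (\forall y \near x^', False) -> open [set x].
Proof.
move=> nearF; rewrite openE => _ ->.
apply: (@filterS _ _ _ [set y | y != x -> False]) nearF => y /=.
by case: eqVneq => // _ /(_ isT).
Qed.

Lemma separable_image (P T : topologicalType) (g : P -> T) :
  continuous g -> g @` setT = setT -> separable_space P -> separable_space T.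
Proof.
move=> g_cont g_surj [S [cS clS]]; exists (g @` S); split.
  exact: sub_countable (card_image_le g S) cS.
rewrite -subTset -g_surj => _ [p _ <-] B /g_cont gB.
have : closure S p by rewrite clS.
by move=> /(_ _ gB) [q [Sq gqB]]; exists (g q).
Qed.

Section accumulation_points_of_graph.
Variables (X Y : topologicalType) (f : X -> Y).

Lemma near_dnbhs_notin_compact {K : set Y} {x : X} :
  compact K -> (forall y, K y -> ~ Lf f (x, y)) ->
  \forall x' \near x^', ~ K (f x').
Proof.
move=> /compact_near_coveringP cK KnL.
have : \forall x' \near x^', K `<=` (fun y => f x' != y).
  apply: cK => y Ky; have := KnL y Ky; rewrite /Lf not_limit_pointE.
  move=> [W [[A B] [/= xA yB] ABW] graphW].
  exists (B, A `&` [set x' | x' != x]) => /=.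
    by split => //; apply: filterI; [exact: nbhs_dnbhs | exact: nbhs_dnbhs_neq].
  move=> [y' x'] [/= By' [Ax' x'x]]; apply/eqP => fx'y'.
  have : (graph_of f `&` W) (x', y').
    by split; [rewrite /graph_of /= fx'y' | exact: ABW].
  by move=> /graphW [] /eqP; rewrite (negbTE x'x).
by apply: filterS => x' Kf /[dup] /Kf /eqP.
Qed.

Lemma Lf_closed : accessible_space X -> accessible_space Y -> closed (Lf f).
Proof. by move=> accX accY; apply: limit_point_closed; exact: accessible_prod. Qed.

Lemma Lf_section_nonempty (x : X) :
  compact [set: Y] -> ~ open [set x] -> exists y, Lf f (x, y).
Proof.
move=> cY x_nopen; apply: contrapT => noLx; apply/x_nopen/dnbhs_False_open_set1.
have := near_dnbhs_notin_compact cY (fun y _ Lxy => noLx (ex_intro _ y Lxy)).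
by apply: filterS => x' /(_ I).
Qed.

Lemma countable_Lf_section_empty (R : realType) (d : X -> X -> R)
    (K : nat -> set Y) :
  is_metric d -> metric_induces d -> separable_space X ->
  (forall n, compact (K n)) -> \bigcup_n K n = setT ->
  countable [set x | ~ exists y, Lf f (x, y)].
Proof.
move=> d_metric d_induces sepX cK UK.
have sub_iso : [set x | ~ exists y, Lf f (x, y)] `<=`
    \bigcup_n isolated (f @^-1` K n).
  move=> x noLx; have : (\bigcup_n K n) (f x) by rewrite UK.
  move=> [n _ Kfx]; exists n => //; apply: dnbhs_isolated => //.
  by apply: near_dnbhs_notin_compact (cK n) _ => y _ Lxy; apply: noLx; exists y.
apply: sub_countable (subset_card_le sub_iso) _.
apply: bigcup_countable; first exact: countableP.
by move=> n _; apply: separable_countable_isolated d_metric d_induces _ sepX.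
Qed.

End accumulation_points_of_graph.

Theorem proposition5p1 (R : realType) (X : topologicalType) (Y : tvsType R)
  (f : X -> Y) :
  sigma_compact X -> metrizable R X -> suslin_space R X -> no_isolated_points X ->
  frechet_space Y ->
  (compact [set: Y] ->
     closed (Lf f) /\ (forall x : X, exists y : Y, Lf f (x, y))) /\
  (sigma_compact Y -> ~ compact [set: Y] ->
     closed (Lf f) /\
     exists D : set X, countable D /\
       forall x : X, ~ D x -> exists y : Y, Lf f (x, y)).
Proof.
move=> _ [d [d_metric d_induces]] [X_hausdorff [P [g [[sepP _] g_cont g_surj]]]].
move=> X_perfect [dY [dY_metric dY_induces _ _]].
have Lf_closed : closed (Lf f).
  apply: Lf_closed; first exact: hausdorff_accessible.
  exact: metric_accessible dY_metric dY_induces.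
split=> [cY|[K [cK UK]] _]; split=> //.
  by move=> x; apply: Lf_section_nonempty.
exists [set x | ~ exists y, Lf f (x, y)]; split; last by move=> x /contrapT.
apply: countable_Lf_section_empty d_metric d_induces _ cK UK.
exact: separable_image g_cont g_surj sepP.
Qed.
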